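(* Let $m,\gamma\in\mathbb{N}$ with $2\gamma<m$, and let $$P_{m,\gamma}(x):=\frac{1}{\sqrt{\gamma}}\sum_{v=0}^{2^\gamma-1}\sum_{j=0}^{\gamma-1}w_{2^{m-\gamma}v+2^{m-2\gamma}(v\oplus 2^j)}(x).$$ Let $\lambda=\{\lambda_n\}_{n\ge1}$ be a nondecreasing sequence of integers with $1\le\lambda_n\le n$. Let $x\in[0,1)$ and let $\ell(x)$ be an integer with $\ell(x)\in[2^{m-\gamma},2^m)\cap 2^{m-2\gamma}\mathbb{N}$ and $|S_{\ell(x)}(P_{m,\gamma};x)|\ge\frac14\sqrt{\gamma}$ (such an integer exists for every $x$). If $\lambda_{\ell(x)}<2^{m-2\gamma}$, then $$V^{(\lambda)}_{\ell(x)}(P_{m,\gamma};x)=S_{\ell(x)}(P_{m,\gamma};x),$$ and in particular $|V^{(\lambda)}_{\ell(x)}(P_{m,\gamma};x)|\ge\frac14\sqrt{\gamma}$.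
   Context: For nonnegative integers $n=\sum_j n_j2^j$, $m=\sum_j m_j2^j$ (binary expansions), $n\oplus m:=\sum_{j\ge0}|n_j-m_j|2^j$. Rademacher functions: $r_j(x):=(-1)^{\lfloor 2^{j+1}x\rfloor}$ on $[0,1)$; Walsh--Paley functions: $w_n(x):=\prod_{j\ge0}r_j(x)^{n_j}$. For $f\in L^1([0,1))$, $\widehat f(n):=\int_0^1 f w_n$, $S_n(f;x):=\sum_{k=0}^{n-1}\widehat f(k)w_k(x)$ (so $S_0=0$), and the de la Vallée Poussin means are $V_n^{(\lambda)}(f;x):=\frac{1}{\lambda_n+1}\sum_{k=n-\lambda_n}^{n}S_k(f;x)$. $2^s\mathbb{N}$ denotes the positive integer multiples of $2^s$. *)

From Stdlib Require Import Reals Arith.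
From Coquelicot Require Import Coquelicot.
Open Scope R_scope.

Fixpoint sumR (f : nat -> R) (n : nat) : R :=
  match n with
  | O => 0
  | S k => sumR f k + f k
  end.

Fixpoint prodR (f : nat -> R) (n : nat) : R :=
  match n with
  | O => 1
  | S k => prodR f k * f k
  end.

Definition rademacher (j : nat) (x : R) : R :=
  if Z.even (Int_part (2 ^ (S j) * x)) then 1 else -1.

(* Walsh--Paley function w_n(x) = prod_j r_j(x)^{n_j}; bits j >= n of n vanish. *)
Definition walsh (n : nat) (x : R) : R :=
  prodR (fun j => if Nat.testbit n j then rademacher j x else 1) n.

(* n (+) m = sum_j |n_j - m_j| 2^j, i.e. bitwise xor *)
Definition dxor (n m : nat) : nat := Nat.lxor n m.

Definition walsh_coef (f : R -> R) (n : nat) : R :=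
  RInt (fun t => f t * walsh n t) 0 1.

Definition walsh_S (n : nat) (f : R -> R) (x : R) : R :=
  sumR (fun k => walsh_coef f k * walsh k x) n.

Definition vallee_poussin (lam : nat -> nat) (n : nat) (f : R -> R) (x : R) : R :=
  / (INR (lam n) + 1) *
  sumR (fun i => walsh_S (n - lam n + i)%nat f x) (S (lam n)).

Definition P_poly (m g : nat) (x : R) : R :=
  / sqrt (INR g) *
  sumR (fun v =>
     sumR (fun j =>
        walsh (2 ^ (m - g) * v + 2 ^ (m - 2 * g) * dxor v (2 ^ j))%nat x) g)
     (2 ^ g)%nat.

(* Every frequency 2^(m-g) v + 2^(m-2g) (v (+) 2^j) of P_{m,g} is a multiple of
   d = 2^(m-2g), and the Walsh system is orthogonal, so the Walsh coefficients of
   P_{m,g} vanish off dZ.  Hence S_k(P) = S_l(P) whenever d | l and l - d < k <= l,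
   and as lam_l < d every partial sum averaged in V_l equals S_l.
   Orthogonality: w_a w_b = w_(a (+) b), and for n <> 0 with lowest set bit J,
   translating by 2^-(J+1) flips the sign of r_J and fixes every r_j with j > J,
   so the 1-periodic step function w_n is antiperiodic and has mean zero. *)
From Stdlib Require Import Reals Arith Lia Lra.
From Coquelicot Require Import Coquelicot.
Open Scope R_scope.

Lemma sumR_ext (f g : nat -> R) (n : nat) :
  (forall k, (k < n)%nat -> f k = g k) -> sumR f n = sumR g n.
Proof.
  induction n as [|n IH]; intros Hfg; simpl; [reflexivity|].
  rewrite IH by (intros; apply Hfg; lia). rewrite Hfg by lia. reflexivity.
Qed.

Lemma sumR_const (c : R) (n : nat) : sumR (fun _ => c) n = INR n * c.
Proof. induction n as [|n IH]; simpl sumR; [simpl; ring|]. rewrite IH, S_INR; ring. Qed.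

Lemma sumR_mulr (f : nat -> R) (n : nat) (c : R) :
  sumR f n * c = sumR (fun k => f k * c) n.
Proof. induction n as [|n IH]; simpl; [ring|]. rewrite <- IH; ring. Qed.

Lemma sumR_zero_between (f : nat -> R) (a b : nat) : (a <= b)%nat ->
  (forall k, (a <= k < b)%nat -> f k = 0) -> sumR f a = sumR f b.
Proof.
  induction b as [|b IH]; intros Hab Hf.
  - replace a with 0%nat by lia; reflexivity.
  - destruct (Nat.eq_dec a (S b)) as [->|Ha]; [reflexivity|].
    simpl. rewrite Hf by lia. rewrite <- IH by (try intros; try apply Hf; lia). ring.
Qed.

Lemma prodR_ext (f g : nat -> R) (n : nat) :
  (forall j, (j < n)%nat -> f j = g j) -> prodR f n = prodR g n.
Proof.
  induction n as [|n IH]; intros Hfg; simpl; [reflexivity|].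
  rewrite IH by (intros; apply Hfg; lia). rewrite Hfg by lia. reflexivity.
Qed.

Lemma prodR_mul (f g : nat -> R) (n : nat) :
  prodR f n * prodR g n = prodR (fun j => f j * g j) n.
Proof. induction n as [|n IH]; simpl; [ring|]. rewrite <- IH; ring. Qed.

Lemma prodR_one_above (f : nat -> R) (N n : nat) : (N <= n)%nat ->
  (forall j, (N <= j)%nat -> f j = 1) -> prodR f n = prodR f N.
Proof.
  induction n as [|n IH]; intros HN Hf.
  - replace N with 0%nat by lia; reflexivity.
  - destruct (Nat.eq_dec N (S n)) as [->|HNn]; [reflexivity|].
    simpl. rewrite Hf by lia. rewrite IH by (try intros; try apply Hf; lia). ring.
Qed.

Lemma prodR_sign_at (J N : nat) :
  prodR (fun j => if Nat.eqb j J then -1 else 1) N = if Nat.ltb J N then -1 else 1.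
Proof.
  induction N as [|N IH]; simpl prodR; [reflexivity|]. rewrite IH.
  destruct (Nat.ltb_spec J N), (Nat.eqb_spec N J), (Nat.ltb_spec J (S N));
    try lia; ring.
Qed.

Lemma Int_part_plus_IZR (y : R) (z : Z) : Int_part (y + IZR z) = (Int_part y + z)%Z.
Proof.
  symmetry; apply Int_part_spec. destruct (base_Int_part y). rewrite plus_IZR; lra.
Qed.

Lemma Int_part_div_IZR (y : R) (d : Z) : (0 < d)%Z ->
  Int_part (y / IZR d) = (Int_part y / d)%Z.
Proof.
  intros Hd. symmetry; apply Int_part_spec.
  pose proof (Z.div_mod (Int_part y) d ltac:(lia)) as Hdiv.
  pose proof (Z.mod_pos_bound (Int_part y) d Hd) as Hmod.
  set (q := (Int_part y / d)%Z) in *; set (r := (Int_part y mod d)%Z) in *.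
  assert (Hdr : 0 < IZR d) by (apply IZR_lt; lia).
  assert (Hr0 : 0 <= IZR r) by (apply IZR_le; lia).
  assert (Hr1 : IZR r + 1 <= IZR d) by (rewrite <- plus_IZR; apply IZR_le; lia).
  assert (Hy : IZR (Int_part y) = IZR d * IZR q + IZR r)
    by (rewrite <- mult_IZR, <- plus_IZR; f_equal; lia).
  destruct (base_Int_part y).
  split.
  - apply (Rmult_lt_reg_r (IZR d)); [lra|].
    replace ((y / IZR d - 1) * IZR d) with (y - IZR d) by (field; lra). nra.
  - apply (Rmult_le_reg_r (IZR d)); [lra|].
    replace (y / IZR d * IZR d) with y by (field; lra). nra.
Qed.

Lemma rademacher_shift (j : nat) (x : R) (z : Z) :
  rademacher j (x + IZR z / 2 ^ S j) =
  if Z.even z then rademacher j x else - rademacher j x.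
Proof.
  unfold rademacher.
  assert (H2 : 2 ^ S j <> 0) by (apply pow_nonzero; lra).
  replace (2 ^ S j * (x + IZR z / 2 ^ S j)) with (2 ^ S j * x + IZR z)
    by (field; exact H2).
  rewrite Int_part_plus_IZR, Z.even_add.
  destruct (Z.even (Int_part _)), (Z.even z); simpl; lra.
Qed.

Lemma rademacher_periodic (j : nat) (x : R) : rademacher j (x + 1) = rademacher j x.
Proof.
  replace (x + 1) with (x + IZR (2 * 2 ^ Z.of_nat j) / 2 ^ S j).
  - rewrite rademacher_shift, Z.even_mul; reflexivity.
  - rewrite mult_IZR, <- pow_IZR. simpl. field. apply pow_nonzero; lra.
Qed.

Lemma rademacher_shift_coarse (J j : nat) (x : R) : (J <= j)%nat ->
  rademacher j (x + / 2 ^ S J) =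
  if Nat.eqb j J then - rademacher j x else rademacher j x.
Proof.
  intros HJj.
  replace (x + / 2 ^ S J) with (x + IZR (2 ^ Z.of_nat (j - J)) / 2 ^ S j).
  - rewrite rademacher_shift.
    destruct (Nat.eqb_spec j J) as [->|HjJ].
    + rewrite Nat.sub_diag; reflexivity.
    + rewrite Z.even_pow by lia; reflexivity.
  - rewrite <- pow_IZR. replace (S j) with (j - J + S J)%nat by lia.
    rewrite pow_add. field. split; apply pow_nonzero; lra.
Qed.

Lemma rademacher_sqr (j : nat) (x : R) : rademacher j x * rademacher j x = 1.
Proof. unfold rademacher; destruct (Z.even _); ring. Qed.

Lemma rademacher_dyadic (N j : nat) (x : R) : (j < N)%nat ->
  rademacher j x =
  if Z.even (Int_part (2 ^ N * x) / 2 ^ Z.of_nat (N - S j)) then 1 else -1.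
Proof.
  intros HjN. unfold rademacher.
  replace (2 ^ S j * x) with (2 ^ N * x / IZR (2 ^ Z.of_nat (N - S j))).
  - rewrite Int_part_div_IZR by (apply Z.pow_pos_nonneg; lia); reflexivity.
  - rewrite <- pow_IZR. replace N with (N - S j + S j)%nat at 1 by lia.
    rewrite pow_add. field. apply pow_nonzero; lra.
Qed.

Lemma testbit_above_self (n j : nat) : (n <= j)%nat -> Nat.testbit n j = false.
Proof.
  intros Hnj. destruct n as [|n]; [apply Nat.bits_0|].
  apply Nat.bits_above_log2. pose proof (Nat.log2_lt_lin (S n)). lia.
Qed.

Lemma lowest_bit (n j : nat) : Nat.testbit n j = true ->
  exists J, Nat.testbit n J = true /\ forall i, (i < J)%nat -> Nat.testbit n i = false.
Proof.
  revert n. induction j as [|j IH]; intros n Hj.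
  - exists 0%nat. split; [exact Hj | intros; lia].
  - destruct (Nat.testbit n 0) eqn:H0.
    + exists 0%nat. split; [exact H0 | intros; lia].
    + rewrite <- Nat.testbit_div2 in Hj.
      destruct (IH _ Hj) as [J [HJ Hlow]]. exists (S J).
      rewrite <- Nat.testbit_div2. split; [exact HJ|].
      intros [|i] Hi; [exact H0|]. rewrite <- Nat.testbit_div2. apply Hlow; lia.
Qed.

(* [walsh n] multiplies exactly [n] factors; padding to a common length [N] lets
   Walsh functions of different orders be multiplied factorwise. *)
Definition walsh_upto (N n : nat) (x : R) : R :=
  prodR (fun j => if Nat.testbit n j then rademacher j x else 1) N.

Lemma walsh_upto_walsh (N n : nat) (x : R) : (n <= N)%nat ->
  walsh_upto N n x = walsh n x.
Proof.
  intros HnN. apply prodR_one_above; [exact HnN|].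
  intros j Hj. rewrite testbit_above_self by lia. reflexivity.
Qed.

Lemma walsh_upto_mul (N a b : nat) (x : R) :
  walsh_upto N a x * walsh_upto N b x = walsh_upto N (Nat.lxor a b) x.
Proof.
  unfold walsh_upto. rewrite prodR_mul. apply prodR_ext. intros j _.
  rewrite Nat.lxor_spec. pose proof (rademacher_sqr j x).
  destruct (Nat.testbit a j), (Nat.testbit b j); simpl; lra.
Qed.

Lemma walsh_upto_periodic (N n : nat) (x : R) :
  walsh_upto N n (x + 1) = walsh_upto N n x.
Proof.
  apply prodR_ext. intros j _. rewrite rademacher_periodic. reflexivity.
Qed.

Lemma walsh_upto_antiperiodic (N n J : nat) (x : R) : (J < N)%nat ->
  Nat.testbit n J = true -> (forall i, (i < J)%nat -> Nat.testbit n i = false) ->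
  walsh_upto N n (x + / 2 ^ S J) = - walsh_upto N n x.
Proof.
  intros HJN HJ Hlow. unfold walsh_upto.
  rewrite (prodR_ext _ (fun j => (if Nat.eqb j J then -1 else 1) *
                                 (if Nat.testbit n j then rademacher j x else 1))).
  - rewrite <- prodR_mul, prodR_sign_at.
    destruct (Nat.ltb_spec J N); [ring | lia].
  - intros j _. destruct (Nat.lt_ge_cases j J) as [HjJ|HJj].
    + rewrite Hlow by exact HjJ. destruct (Nat.eqb_spec j J); [lia | ring].
    + rewrite rademacher_shift_coarse by exact HJj.
      destruct (Nat.eqb_spec j J) as [->|]; [rewrite HJ; ring|].
      destruct (Nat.testbit n j); ring.
Qed.

Lemma walsh_upto_dyadic (N n : nat) (x y : R) :
  Int_part (2 ^ N * x) = Int_part (2 ^ N * y) -> walsh_upto N n x = walsh_upto N n y.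
Proof.
  intros Hxy. apply prodR_ext. intros j Hj.
  rewrite !(rademacher_dyadic N j) by exact Hj. rewrite Hxy. reflexivity.
Qed.

Lemma ex_RInt_grid_step (f : R -> R) (M : R) : 0 < M ->
  (forall x y, Int_part (M * x) = Int_part (M * y) -> f x = f y) ->
  forall k : nat, ex_RInt f 0 (INR k / M).
Proof.
  intros HM Hf k. induction k as [|k IH].
  - replace (INR 0 / M) with 0 by (simpl; field; lra). apply ex_RInt_point.
  - apply ex_RInt_Chasles with (INR k / M); [exact IH|].
    apply ex_RInt_ext with (fun _ => f (INR k / M)); [|apply ex_RInt_const].
    assert (Hk : INR k / M < INR (S k) / M).
    { apply Rmult_lt_compat_r; [apply Rinv_0_lt_compat; lra | rewrite S_INR; lra]. }
    rewrite Rmin_left, Rmax_right by lra. intros z [Hz1 Hz2].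
    assert (HMz : INR k < M * z < INR k + 1).
    { rewrite S_INR in Hz2.
      split; [replace (INR k) with (M * (INR k / M)) by (field; lra)
             | replace (INR k + 1) with (M * ((INR k + 1) / M)) by (field; lra)];
        apply Rmult_lt_compat_l; assumption. }
    symmetry; apply Hf.
    replace (M * (INR k / M)) with (INR k) by (field; lra).
    rewrite Int_part_INR. symmetry; apply Int_part_spec.
    rewrite <- INR_IZR_INZ; lra.
Qed.

Lemma RInt_shift (f : R -> R) (a b h : R) : ex_RInt f (a + h) (b + h) ->
  RInt (fun t => f (t + h)) a b = RInt f (a + h) (b + h).
Proof.
  intros Hex.
  replace (a + h) with (1 * a + h) in * by ring.
  replace (b + h) with (1 * b + h) in * by ring.
  rewrite <- (RInt_comp_lin f 1 h a b) by exact Hex.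
  apply RInt_ext. intros t _.
  rewrite (scal_one (K := R_AbsRing)), Rmult_1_l. reflexivity.
Qed.

Lemma is_RInt_antiperiodic (f : R -> R) (h : R) : 0 <= h <= 1 -> ex_RInt f 0 2 ->
  (forall x, f (x + 1) = f x) -> (forall x, f (x + h) = - f x) -> is_RInt f 0 1 0.
Proof.
  intros Hh Hex Hper Hanti.
  assert (Hsub : forall a b, 0 <= a <= b -> b <= 2 -> ex_RInt f a b).
  { intros a b Hab Hb.
    apply (ex_RInt_Chasles_2 (V := R_CompleteNormedModule) f 0); [lra|].
    apply (ex_RInt_Chasles_1 (V := R_CompleteNormedModule) f 0 b 2); [lra | exact Hex]. }
  assert (Hlin : RInt f h 1 + RInt f 1 (1 + h) = RInt f h (1 + h))
    by (apply (RInt_Chasles (V := R_CompleteNormedModule)); apply Hsub; lra).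
  assert (Hsplit : RInt f 0 h + RInt f h 1 = RInt f 0 1)
    by (apply (RInt_Chasles (V := R_CompleteNormedModule)); apply Hsub; lra).
  assert (Hone : RInt f 1 (1 + h) = RInt f 0 h).
  { replace (RInt f 1 (1 + h)) with (RInt f (0 + 1) (h + 1)) by (f_equal; ring).
    rewrite <- RInt_shift by (apply Hsub; lra).
    apply RInt_ext. intros t _. apply Hper. }
  assert (Hhalf : RInt f h (1 + h) = - RInt f 0 1).
  { replace (RInt f h (1 + h)) with (RInt f (0 + h) (1 + h)) by (f_equal; ring).
    rewrite <- RInt_shift by (apply Hsub; lra).
    rewrite (RInt_ext _ (fun t => opp (f t))) by (intros t _; apply Hanti).
    apply (RInt_opp (V := R_CompleteNormedModule)). apply Hsub; lra. }
  assert (Hzero : RInt f 0 1 = 0) by lra.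
  pose proof (RInt_correct (V := R_CompleteNormedModule) f 0 1) as Hcorrect.
  rewrite Hzero in Hcorrect. apply Hcorrect, Hsub; lra.
Qed.

Lemma ex_RInt_walsh_upto (N n : nat) : ex_RInt (walsh_upto N n) 0 2.
Proof.
  replace 2 with (INR (2 * 2 ^ N) / 2 ^ N).
  - apply ex_RInt_grid_step; [apply pow_lt; lra|].
    intros x y; apply walsh_upto_dyadic.
  - rewrite mult_INR, pow_INR. replace (INR 2) with 2 by (simpl; lra).
    field. apply pow_nonzero; lra.
Qed.

Lemma is_RInt_walsh_upto (N n : nat) : n <> 0%nat -> (n <= N)%nat ->
  is_RInt (walsh_upto N n) 0 1 0.
Proof.
  intros Hn HnN.
  destruct (lowest_bit n _ (Nat.bit_log2 n Hn)) as [J [HJ Hlow]].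
  assert (HJn : (J < n)%nat).
  { destruct (Nat.lt_ge_cases J n) as [|HnJ]; [assumption|].
    rewrite testbit_above_self in HJ by exact HnJ. discriminate. }
  apply is_RInt_antiperiodic with (/ 2 ^ S J).
  - assert (1 <= 2 ^ S J) by (apply pow_R1_Rle; lra).
    split; [apply Rlt_le, Rinv_0_lt_compat; lra|].
    rewrite <- Rinv_1. apply Rinv_le_contravar; lra.
  - apply ex_RInt_walsh_upto.
  - intros x; apply walsh_upto_periodic.
  - intros x; apply walsh_upto_antiperiodic; [lia | exact HJ | exact Hlow].
Qed.

Lemma is_RInt_walsh_mul (a b : nat) : a <> b ->
  is_RInt (fun t => walsh a t * walsh b t) 0 1 0.
Proof.
  intros Hab. set (N := (a + b + Nat.lxor a b)%nat).
  apply is_RInt_ext with (walsh_upto N (Nat.lxor a b)).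
  - intros t _. rewrite <- walsh_upto_mul, !walsh_upto_walsh by (unfold N; lia).
    reflexivity.
  - apply is_RInt_walsh_upto; [rewrite Nat.lxor_eq_0_iff; exact Hab | unfold N; lia].
Qed.

Lemma is_RInt_sumR (F : nat -> R -> R) (n : nat) (a b : R) :
  (forall i, (i < n)%nat -> is_RInt (F i) a b 0) ->
  is_RInt (fun t => sumR (fun i => F i t) n) a b 0.
Proof.
  induction n as [|n IH]; intros HF; simpl.
  - pose proof (is_RInt_const (V := R_NormedModule) a b 0) as Hconst.
    change (scal (b - a) 0) with ((b - a) * 0) in Hconst.
    rewrite Rmult_0_r in Hconst. exact Hconst.
  - assert (Hplus := is_RInt_plus (V := R_NormedModule) _ _ a b 0 0
                       (IH (fun i Hi => HF i ltac:(lia))) (HF n ltac:(lia))).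
    change (plus 0 0) with (0 + 0) in Hplus.
    rewrite Rplus_0_r in Hplus. exact Hplus.
Qed.

Lemma walsh_coef_walsh_sum (c : R) (F : nat -> nat -> nat) (V J k : nat) :
  (forall v j, (v < V)%nat -> (j < J)%nat -> F v j <> k) ->
  walsh_coef (fun t => c * sumR (fun v => sumR (fun j => walsh (F v j) t) J) V) k = 0.
Proof.
  intros HF. unfold walsh_coef. apply is_RInt_unique.
  apply is_RInt_ext with (fun t => scal c
    (sumR (fun v => sumR (fun j => walsh (F v j) t * walsh k t) J) V)).
  { intros t _. change scal with Rmult; simpl. unfold mult; simpl.
    rewrite Rmult_assoc, sumR_mulr. f_equal.
    apply sumR_ext. intros v _. symmetry; apply sumR_mulr. }
  assert (Hsum : is_RInt (fun t =>
      sumR (fun v => sumR (fun j => walsh (F v j) t * walsh k t) J) V) 0 1 0).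
  { apply is_RInt_sumR. intros v Hv.
    apply (is_RInt_sumR (fun j t => walsh (F v j) t * walsh k t)). intros j Hj.
    apply is_RInt_walsh_mul, HF; assumption. }
  pose proof (is_RInt_scal (V := R_NormedModule) _ 0 1 c 0 Hsum) as Hscal.
  change (scal c 0) with (c * 0) in Hscal.
  rewrite Rmult_0_r in Hscal. exact Hscal.
Qed.

Lemma P_poly_coef_eq0 (m g k : nat) : ~ Nat.divide (2 ^ (m - 2 * g)) k ->
  walsh_coef (P_poly m g) k = 0.
Proof.
  intros Hk. apply walsh_coef_walsh_sum. intros v j _ _ Hvj. apply Hk. rewrite <- Hvj.
  apply Nat.divide_add_r; [|apply Nat.divide_factor_l].
  replace (m - g)%nat with (m - 2 * g + (m - g - (m - 2 * g)))%nat by lia.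
  rewrite Nat.pow_add_r, <- Nat.mul_assoc. apply Nat.divide_factor_l.
Qed.

Lemma walsh_S_lacunary (f : R -> R) (x : R) (d k l : nat) :
  (forall i, ~ Nat.divide d i -> walsh_coef f i = 0) -> Nat.divide d l ->
  (k <= l)%nat -> (l - k < d)%nat -> walsh_S k f x = walsh_S l f x.
Proof.
  intros Hcoef Hdl Hkl Hgap. apply sumR_zero_between; [exact Hkl|].
  intros i Hi. rewrite Hcoef; [ring|]. intros Hdi.
  assert (Hd : Nat.divide d (l - i)) by (apply Nat.divide_sub_r; assumption).
  apply Nat.divide_pos_le in Hd; lia.
Qed.

Lemma vallee_poussin_eq_walsh_S (lam : nat -> nat) (n : nat) (f : R -> R) (x : R) :
  (lam n <= n)%nat ->
  (forall k, (n - lam n <= k <= n)%nat -> walsh_S k f x = walsh_S n f x) ->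
  vallee_poussin lam n f x = walsh_S n f x.
Proof.
  intros Hlam HS. unfold vallee_poussin.
  rewrite (sumR_ext _ (fun _ => walsh_S n f x)) by (intros i Hi; apply HS; lia).
  rewrite sumR_const, S_INR. field. pose proof (pos_INR (lam n)). lra.
Qed.

Theorem corollary2p2 (m g : nat) (lam : nat -> nat) (x : R) (l : nat) :
  (2 * g < m)%nat ->
  (forall n n' : nat, (1 <= n)%nat -> (n <= n')%nat -> (lam n <= lam n')%nat) ->
  (forall n : nat, (1 <= n)%nat -> (1 <= lam n <= n)%nat) ->
  0 <= x < 1 ->
  (2 ^ (m - g) <= l < 2 ^ m)%nat ->
  Nat.divide (2 ^ (m - 2 * g)) l ->
  Rabs (walsh_S l (P_poly m g) x) >= sqrt (INR g) / 4 ->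
  (lam l < 2 ^ (m - 2 * g))%nat ->
  vallee_poussin lam l (P_poly m g) x = walsh_S l (P_poly m g) x /\
  Rabs (vallee_poussin lam l (P_poly m g) x) >= sqrt (INR g) / 4.
Proof.
  intros _ _ Hlam _ Hl Hdl Habs Hgap.
  assert (Hlam_l : (lam l <= l)%nat).
  { pose proof (Nat.pow_nonzero 2 (m - g) ltac:(lia)). apply Hlam; lia. }
  assert (HV : vallee_poussin lam l (P_poly m g) x = walsh_S l (P_poly m g) x).
  { apply vallee_poussin_eq_walsh_S; [exact Hlam_l|]. intros k Hk.
    apply walsh_S_lacunary with (2 ^ (m - 2 * g))%nat; [| exact Hdl | lia | lia].
    intros i; apply P_poly_coef_eq0. }
  split; [exact HV | rewrite HV; exact Habs].
Qed.
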